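(* Let $\mathcal{H}_A\cong\mathbb{C}^{d_A}$, $\mathcal{H}_B\cong\mathbb{C}^{d_B}$ with computational bases. Define the diagonal operators $$O_A=\sum_{\vec a=(a,a',a'')\in\mathbb{Z}_{d_A}^3}\big(\alpha_A\delta_{a,a'}+\beta_A\big)|\vec a\rangle\langle\vec a|,\qquad O_B=\sum_{\vec b=(b,b',b'')\in\mathbb{Z}_{d_B}^3}\big(\alpha_B\delta_{b',b''}+\beta_B\big)|\vec b\rangle\langle\vec b|,$$ with $\alpha_A=d_A+1$, $\beta_A=-1$, $\alpha_B=d_B+1$, $\beta_B=-1$. Then $\Phi^3_A(O_A)=W^A_{(1,2)}$, $\Phi^3_B(O_B)=W^B_{(2,3)}$, and hence $(\Phi^3_A\otimes\Phi^3_B)(O_A\otimes O_B)=W^A_{(1,2)}\otimes W^B_{(2,3)}$.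
   Context: $\Phi^3(X)=\int_{\mathrm{Haar}}dU\,U^{\otimes3}XU^{\dagger\otimes3}$ is the 3-fold Haar twirl on $(\mathbb{C}^d)^{\otimes3}$; $\Phi^3_A\otimes\Phi^3_B$ denotes independent twirling on the $A$ and $B$ parts of $(\mathcal{H}_A\otimes\mathcal{H}_B)^{\otimes3}\cong\mathcal{H}_A^{\otimes3}\otimes\mathcal{H}_B^{\otimes3}$. $W_{(i,j)}$ is the operator swapping tensor factors $i$ and $j$ of the three copies; superscripts indicate the system. *)

From HB Require Import structures.
From mathcomp Require Import all_boot all_order all_algebra.
From mathcomp Require Import complex.
From mathcomp Require Import all_classical all_reals all_analysis.
Set Implicit Arguments. Unset Strict Implicit. Unset Printing Implicit Defensive.
Import Order.TTheory GRing.Theory Num.Theory.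
Local Open Scope ring_scope.
Local Open Scope classical_set_scope.

Section Twirl.
Variable R : realType.
Local Notation C := (R[i]).

Definition CMx (d : nat) := 'M[C]_d.
HB.instance Definition _ (d : nat) := Choice.on (CMx d).
HB.instance Definition _ (d : nat) := isPointed.Build (CMx d) (0%R : 'M[C]_d).

Definition conjT d (M : 'M[C]_d) : 'M[C]_d := (map_mx Num.conj M)^T.

Definition unitary_mx d (M : 'M[C]_d) : Prop := M *m conjT M = 1%:M.

(* Borel sigma-algebra on matrices: generated by the real and imaginary
   parts of the entries (coordinates of C^(d*d) = R^(2 d^2)). *)
Definition entry_sets (d : nat) : set (set (CMx d)) :=
  [set A | exists (i j : 'I_d) (B : set R), measurable B /\
     (A = (fun M : CMx d => complex.Re (M i j)) @^-1` B \/
      A = (fun M : CMx d => complex.Im (M i j)) @^-1` B)].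

Definition MxSpace (d : nat) := g_sigma_algebraType (@entry_sets d).
HB.instance Definition _ (d : nat) :=
  Measurable.copy (MxSpace d) (g_sigma_algebraType (@entry_sets d)).

(* mu is a (normalized) Haar measure on U(d): a probability measure on
   matrices, concentrated on U(d), invariant under left multiplication by
   every unitary V. *)
Definition is_Haar (d : nat) (mu : probability (MxSpace d) R) : Prop :=
  mu [set M : MxSpace d | unitary_mx M] = 1%E /\
  forall (V : 'M[C]_d), unitary_mx V ->
    forall A : set (MxSpace d), measurable A ->
      mu ((fun M : MxSpace d => V *m M) @^-1` A) = mu A.

Definition cint (d : nat) (mu : probability (MxSpace d) R)
    (f : MxSpace d -> C) : C :=
  Complex (Rintegral mu setT (fun x => complex.Re (f x)))
          (Rintegral mu setT (fun x => complex.Im (f x))).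

(* computational basis of (C^d)^{(x)3}: triples (a, a', a'') *)
Definition idx3 (d : nat) := ('I_d * 'I_d * 'I_d)%type.

(* an operator on a space with computational basis indexed by I is given
   by its matrix entries <x|X|y> *)
Definition op (I : Type) := I -> I -> C.

Definition tens3 d (U : 'M[C]_d) : op (idx3 d) :=
  fun x y => U x.1.1 y.1.1 * U x.1.2 y.1.2 * U x.2 y.2.

Definition kron (I J : Type) (X : op I) (Y : op J) : op (I * J) :=
  fun x y => X x.1 y.1 * Y x.2 y.2.

Definition twirl3 d (mu : probability (MxSpace d) R) (X : op (idx3 d))
  : op (idx3 d) :=
  fun x y => cint mu (fun U : MxSpace d =>
    \sum_(z : idx3 d) \sum_(w : idx3 d)
       tens3 U x z * X z w * Num.conj (tens3 U y w)).

Definition twirl3_AB dA dB (muA : probability (MxSpace dA) R)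
    (muB : probability (MxSpace dB) R) (Y : op (idx3 dA * idx3 dB))
  : op (idx3 dA * idx3 dB) :=
  fun x y => cint muA (fun U : MxSpace dA => cint muB (fun V : MxSpace dB =>
    \sum_(z : idx3 dA * idx3 dB) \sum_(w : idx3 dA * idx3 dB)
       (tens3 U x.1 z.1 * tens3 V x.2 z.2) * Y z w *
       Num.conj (tens3 U y.1 w.1 * tens3 V y.2 w.2))).

Definition W12 d : op (idx3 d) :=
  fun x y => if x == (y.1.2, y.1.1, y.2) then 1 else 0.
Definition W23 d : op (idx3 d) :=
  fun x y => if x == (y.1.1, y.2, y.1.2) then 1 else 0.

Definition O_A d : op (idx3 d) :=
  fun x y => if x == y then
     ((d.+1)%:R * (if x.1.1 == x.1.2 then 1 else 0) - 1) else 0.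
Definition O_B d : op (idx3 d) :=
  fun x y => if x == y then
     ((d.+1)%:R * (if x.1.2 == x.2 then 1 else 0) - 1) else 0.

End Twirl.

From HB Require Import structures.
From mathcomp Require Import all_boot all_order all_algebra.
From mathcomp Require Import complex.
From mathcomp Require Import all_classical all_reals all_analysis.
From mathcomp Require Import measurable_realfun ring lra.
Set Implicit Arguments. Unset Strict Implicit. Unset Printing Implicit Defensive.
Import Order.TTheory GRing.Theory Num.Theory.
Local Open Scope ring_scope.
Local Open Scope classical_set_scope.

(* The twirls only involve the second moment M = E[(U ⊗ U) P (U ⊗ U)^†] of the
   Haar measure, where P = Σ_a |a a⟩⟨a a|: indeed O_A = (d+1) P ⊗ 1 - 1 and
   O_B = 1 ⊗ (d+1) P - 1.  Left invariance under diagonal phase matrices makes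
   ⟨k1 k2|M|l1 l2⟩ vanish unless {k1, k2} = {l1, l2} as multisets; invariance
   under the real rotation of angle arccos(3/5) in a coordinate plane (x, x')
   gives ⟨x x|M|x x⟩ = 2 ⟨x x'|M|x x'⟩; and unitarity gives
   Σ_x' ⟨x x'|M|x x'⟩ = 1.  Hence M = (1 + W)/(d+1) with W the swap, so
   Φ(O_A) = (1 + W12) - 1 = W12, Φ(O_B) = W23, and independent twirls factor
   on tensor products of operators. *)

Section UnitaryMatrices.
Variables (R : realType) (d : nat).
Local Notation C := R[i].
Implicit Types U V : 'M[C]_d.

Lemma conjT_mul U V : conjT (U *m V) = conjT V *m conjT U.
Proof. by rewrite /conjT map_mxM trmx_mul. Qed.

Lemma conjTK : involutive (@conjT R d).
Proof. by move=> U; apply/matrixP => i j; rewrite /conjT !mxE conjCK. Qed.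

Lemma unitary_mxC U : unitary_mx U -> conjT U *m U = 1%:M.
Proof. exact: mulmx1C. Qed.

Lemma unitary_mxM U V : unitary_mx U -> unitary_mx V -> unitary_mx (U *m V).
Proof.
by rewrite /unitary_mx => hU hV; rewrite conjT_mul mulmxA -(mulmxA U) hV mulmx1.
Qed.

Lemma unitary_mxMl_inv V U : unitary_mx V -> unitary_mx (V *m U) -> unitary_mx U.
Proof.
move=> hV hVU; have -> : U = conjT V *m (V *m U) by rewrite mulmxA unitary_mxC ?mul1mx.
by apply: unitary_mxM hVU; rewrite /unitary_mx conjTK unitary_mxC.
Qed.

Lemma unitary_row_dot U i j : unitary_mx U -> \sum_a U i a * (U j a)^* = (i == j)%:R.
Proof.
by move/matrixP/(_ i j); rewrite !mxE => <-; apply: eq_bigr => a _; rewrite !mxE.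
Qed.

Lemma unitary_col_norm U a : unitary_mx U -> \sum_k U k a * (U k a)^* = 1.
Proof.
move/unitary_mxC/matrixP/(_ a a); rewrite !mxE eqxx mulr1n => <-.
by apply: eq_bigr => k _; rewrite !mxE mulrC.
Qed.

End UnitaryMatrices.

Section ComplexParts.
Variable R : realType.
Local Notation C := R[i].

Lemma cReM (x y : C) :
  complex.Re (x * y) = complex.Re x * complex.Re y - complex.Im x * complex.Im y.
Proof. by case: x y => [a b] [c e]. Qed.

Lemma cImM (x y : C) :
  complex.Im (x * y) = complex.Re x * complex.Im y + complex.Im x * complex.Re y.
Proof. by case: x y => [a b] [c e]. Qed.

Lemma cReJ (x : C) : complex.Re x^* = complex.Re x. Proof. by case: x. Qed.

Lemma cImJ (x : C) : complex.Im x^* = - complex.Im x. Proof. by case: x. Qed.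

Lemma cRe_mulJ (x : C) : complex.Re (x * x^*) = complex.Re x ^+ 2 + complex.Im x ^+ 2.
Proof. by rewrite cReM cReJ cImJ; ring. Qed.

Definition cnorm1 (z : C) : R := `|complex.Re z| + `|complex.Im z|.

Lemma cnorm1D (x y : C) : cnorm1 (x + y) <= cnorm1 x + cnorm1 y.
Proof.
case: x y => [a b] [c e]; rewrite /cnorm1 /=.
by rewrite addrACA lerD // ler_normD.
Qed.

Lemma cnorm1M (x y : C) : cnorm1 (x * y) <= cnorm1 x * cnorm1 y.
Proof.
case: x y => [a b] [c e]; rewrite /cnorm1 /=.
have h1 := ler_normB (a * c) (b * e); have h2 := ler_normD (a * e) (b * c).
rewrite !normrM in h1 h2; nra.
Qed.

Lemma cnorm1J (x : C) : cnorm1 x^* = cnorm1 x.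
Proof. by case: x => a b; rewrite /cnorm1 /= normrN. Qed.

Lemma cnorm1_le2 (x : C) : complex.Re x ^+ 2 + complex.Im x ^+ 2 <= 1 -> cnorm1 x <= 2.
Proof.
case: x => a b /= h; rewrite /cnorm1 /=.
have ha : `|a| <= 1 by rewrite ler_norml; apply/andP; split; nra.
have hb : `|b| <= 1 by rewrite ler_norml; apply/andP; split; nra.
lra.
Qed.

End ComplexParts.

Section AdmissibleIntegrands.
Variables (R : realType) (d : nat).
Local Notation C := R[i].
Local Notation M := (MxSpace R d).

(* Entries of non-unitary matrices are unbounded, so boundedness is only asked
   on U(d), which carries the whole Haar mass. *)
Definition admissible (f : M -> C) :=
  [/\ measurable_fun setT (fun U => complex.Re (f U)),
      measurable_fun setT (fun U => complex.Im (f U)) &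
      exists K, forall U : M, unitary_mx U -> cnorm1 (f U) <= K].

Lemma admissible_cst c : admissible (fun=> c).
Proof. by split; try exact: measurable_cst; exists (cnorm1 c). Qed.

Lemma unitary_entry_bound (U : 'M[C]_d) i j : unitary_mx U -> cnorm1 (U i j) <= 2.
Proof.
move=> hU; apply: cnorm1_le2; rewrite -cRe_mulJ.
have := congr1 (@complex.Re R) (unitary_row_dot i i hU).
rewrite eqxx raddf_sum (bigD1 j) //= => <-; rewrite lerDl.
by apply: sumr_ge0 => k _; rewrite cRe_mulJ addr_ge0 ?sqr_ge0.
Qed.

Lemma admissible_entry i j : admissible (fun U : M => U i j).
Proof.
split; last by exists 2 => U; exact: unitary_entry_bound.
- move=> _ B mB; rewrite setTI; apply: sub_sigma_algebra.
  by exists i, j, B; split => //; left.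
- move=> _ B mB; rewrite setTI; apply: sub_sigma_algebra.
  by exists i, j, B; split => //; right.
Qed.

Lemma admissibleD f g : admissible f -> admissible g -> admissible (fun U => f U + g U).
Proof.
move=> [mf1 mf2 [Kf hf]] [mg1 mg2 [Kg hg]]; split.
- by under eq_fun do rewrite raddfD; exact: measurable_funD.
- by under eq_fun do rewrite raddfD; exact: measurable_funD.
exists (Kf + Kg) => U hU; apply: le_trans (cnorm1D _ _) _.
by rewrite lerD ?hf ?hg.
Qed.

Lemma admissibleM f g : admissible f -> admissible g -> admissible (fun U => f U * g U).
Proof.
move=> [mf1 mf2 [Kf hf]] [mg1 mg2 [Kg hg]]; split.
- by under eq_fun do rewrite cReM; apply: measurable_funB; exact: measurable_funM.
- by under eq_fun do rewrite cImM; apply: measurable_funD; exact: measurable_funM.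
exists (Kf * Kg) => U hU; apply: le_trans (cnorm1M _ _) _.
apply: ler_pM; rewrite ?hf ?hg //; exact: addr_ge0.
Qed.

Lemma admissible_conj f : admissible f -> admissible (fun U => (f U)^*).
Proof.
move=> [mf1 mf2 [Kf hf]]; split.
- by under eq_fun do rewrite cReJ.
- by under eq_fun do rewrite cImJ; exact: measurableT_comp.
by exists Kf => U hU; rewrite cnorm1J hf.
Qed.

Lemma admissible_sum I (s : seq I) (P : pred I) (F : I -> M -> C) :
  (forall i, admissible (F i)) -> admissible (fun U => \sum_(i <- s | P i) F i U).
Proof.
move=> hF; elim: s => [|i s IH].
  by under eq_fun do rewrite big_nil; exact: admissible_cst.
under eq_fun do rewrite big_cons.
by case: (P i) => //; exact: admissibleD.
Qed.

End AdmissibleIntegrands.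

Ltac admissible_poly :=
  repeat first [ apply: admissible_cst | apply: admissible_entry
               | apply: admissible_sum => ? | apply: admissibleD
               | apply: admissibleM | apply: admissible_conj ].

Section HaarIntegral.
Variables (R : realType) (d : nat).
Local Notation C := R[i].
Local Notation M := (MxSpace R d).
Local Notation Ud := [set U : M | unitary_mx U].

Lemma measurable_mulmx (V : 'M[C]_d) : measurable_fun setT (fun U : M => (V *m U : M)).
Proof.
have hVU i j : admissible (fun U : M => (V *m U) i j).
  by under eq_fun do rewrite mxE; admissible_poly.
eapply measurability; first reflexivity.
move=> _ [A [i [j [B [mB [->|->]]]]] <-].
- by have [mRe _ _] := hVU i j; exact: mRe measurableT B mB.
- by have [_ mIm _] := hVU i j; exact: mIm measurableT B mB.
Qed.

Lemma measurable_unitary : measurable Ud.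
Proof.
have gram i j : admissible (fun U : M => (U *m conjT U) i j).
  rewrite /conjT; under eq_fun do rewrite mxE.
  by under eq_fun do under eq_bigr do rewrite !mxE; admissible_poly.
have -> : Ud = \bigcap_(p in [set: 'I_d * 'I_d])
   ([set U : M | complex.Re ((U *m conjT U) p.1 p.2)
                 = complex.Re ((1%:M : 'M[C]_d) p.1 p.2)] `&`
    [set U : M | complex.Im ((U *m conjT U) p.1 p.2)
                 = complex.Im ((1%:M : 'M[C]_d) p.1 p.2)]).
  apply/seteqP; split => U /=; first by move=> hU [i j] _; rewrite /= hU.
  move=> hU; apply/matrixP => i j; have [/= hRe hIm] := hU (i, j) I.
  by apply/eqP; rewrite eq_complex hRe hIm !eqxx.
apply: fin_bigcap_measurable; first exact: finite_finset.
move=> [i j] _; have [mRe mIm _] := gram i j; apply: measurableI.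
- by rewrite -[X in measurable X]setTI; exact: mRe measurableT _ (measurable_set1 _).
- by rewrite -[X in measurable X]setTI; exact: mIm measurableT _ (measurable_set1 _).
Qed.

Variable mu : probability M R.
Hypothesis mu_Haar : is_Haar mu.

Lemma Rintegral_unitary (g : M -> R) : measurable_fun setT g ->
  Rintegral mu setT g = Rintegral mu Ud g.
Proof.
move=> mg; rewrite /Rintegral -(setUv Ud) integral_setU //.
- rewrite (@null_set_integral _ _ _ _ (~` Ud)) ?adde0 //.
  + exact: measurableC measurable_unitary.
  + by apply/measurable_EFinP; exact: measurable_funTS.
  + have := probability_setC mu measurable_unitary.
    by rewrite mu_Haar.1 subee.
- exact: measurable_unitary.
- exact: measurableC measurable_unitary.
- by rewrite setUv; apply/measurable_EFinP.
- exact/disj_setPCl.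
Qed.

Lemma integrable_unitary (g : M -> R) : measurable_fun setT g ->
  (exists K, forall U : M, unitary_mx U -> `|g U| <= K) -> mu.-integrable Ud (EFin \o g).
Proof.
move=> mg [K hK]; apply: measurable_bounded_integrable.
- exact: measurable_unitary.
- by apply: le_lt_trans (probability_le1 _ measurable_unitary) _; exact: ltry.
- exact: measurable_funTS mg.
- exists K; split; first exact: num_real.
  by move=> r hr U hU; apply: le_trans (hK U hU) (ltW hr).
Qed.

Lemma admissible_integrable f : admissible f ->
  mu.-integrable Ud (EFin \o (fun U => complex.Re (f U))) /\
  mu.-integrable Ud (EFin \o (fun U => complex.Im (f U))).
Proof.
move=> [mRe mIm [K hK]]; split; apply: integrable_unitary => //;
  exists K => U /hK; apply: le_trans; rewrite /cnorm1 ?lerDl ?lerDr //.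
Qed.

Lemma cint_unitary f : admissible f -> cint mu f =
  Complex (Rintegral mu Ud (fun U => complex.Re (f U)))
          (Rintegral mu Ud (fun U => complex.Im (f U))).
Proof. by move=> [mRe mIm _]; rewrite /cint !Rintegral_unitary. Qed.

Lemma cintD f g : admissible f -> admissible g ->
  cint mu (fun U => f U + g U) = cint mu f + cint mu g.
Proof.
move=> hf hg; rewrite !cint_unitary //; last exact: admissibleD.
have [if1 if2] := admissible_integrable hf; have [ig1 ig2] := admissible_integrable hg.
have mU := measurable_unitary.
apply/eqP; rewrite eq_complex /= -!RintegralD //.
by apply/andP; split; apply/eqP; apply: eq_Rintegral => U _; exact: raddfD.
Qed.

Lemma cintZ c f : admissible f -> cint mu (fun U => c * f U) = c * cint mu f.
Proof.
move=> hf; rewrite !cint_unitary //; last by apply: admissibleM => //; exact: admissible_cst.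
have [iRe iIm] := admissible_integrable hf; have mU := measurable_unitary.
have iZ r g : mu.-integrable Ud (EFin \o g) ->
    mu.-integrable Ud (EFin \o (fun U => r * g U)) by exact: integrableZl.
apply/eqP; rewrite eq_complex /=; apply/andP; split; apply/eqP.
- under eq_Rintegral do rewrite cReM.
  by rewrite RintegralB ?RintegralZl ?cReM //; apply: iZ.
- under eq_Rintegral do rewrite cImM.
  by rewrite RintegralD ?RintegralZl ?cImM //; apply: iZ.
Qed.

Lemma cint_cst c : cint mu (fun=> c) = c.
Proof.
have cst1 r : Rintegral mu setT (fun=> r) = r.
  rewrite Rintegral_cst //; set m := fine _.
  have -> : m = 1 by exact: (congr1 fine (probability_setT mu)).
  by rewrite mulr1.
by rewrite /cint !cst1; case: c.
Qed.

Lemma cint_sum I (s : seq I) (P : pred I) (F : I -> M -> C) :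
  (forall i, admissible (F i)) ->
  cint mu (fun U => \sum_(i <- s | P i) F i U) = \sum_(i <- s | P i) cint mu (F i).
Proof.
move=> hF; elim: s => [|i s IH].
  by under eq_fun do rewrite big_nil; rewrite cint_cst big_nil.
under eq_fun do rewrite big_cons; rewrite big_cons.
case: (P i) => //; rewrite cintD ?IH //; exact: admissible_sum.
Qed.

Lemma cint_lincomb (I : finType) (c : I -> C) (F : I -> M -> C) :
  (forall i, admissible (F i)) ->
  cint mu (fun U => \sum_i c i * F i U) = \sum_i c i * cint mu (F i).
Proof.
move=> hF; rewrite cint_sum => [|i]; last by apply: admissibleM => //; exact: admissible_cst.
by apply: eq_bigr => i _; rewrite cintZ.
Qed.

Lemma cint_affine c e f : admissible f ->
  cint mu (fun U => c * f U - e) = c * cint mu f - e.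
Proof.
move=> hf; rewrite cintD ?cintZ ?cint_cst //; last exact: admissible_cst.
by apply: admissibleM => //; exact: admissible_cst.
Qed.

Lemma eq_cint_unitary f g : admissible f -> admissible g ->
  (forall U : M, unitary_mx U -> f U = g U) -> cint mu f = cint mu g.
Proof.
move=> hf hg efg; rewrite !cint_unitary //.
by congr Complex; apply: eq_Rintegral => U /set_mem hU; rewrite efg.
Qed.

Lemma Rintegral_mulmx (V : 'M[C]_d) (g : M -> R) : unitary_mx V ->
  measurable_fun setT g -> (exists K, forall U : M, unitary_mx U -> `|g U| <= K) ->
  Rintegral mu Ud (fun U => g (V *m U)) = Rintegral mu Ud g.
Proof.
move=> hV mg [K hK]; pose phi (U : M) : M := V *m U.
have mphi : measurable_fun setT phi := measurable_mulmx V.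
have mEg : measurable_fun setT (EFin \o g) by exact/measurable_EFinP.
have phiUd : phi @^-1` Ud = Ud.
  by apply/seteqP; split => U /=; [exact: unitary_mxMl_inv | exact: unitary_mxM].
have ig : mu.-integrable (phi @^-1` Ud) ((EFin \o g) \o phi).
  rewrite phiUd; apply: (integrable_unitary (g := g \o phi)).
    exact: measurableT_comp mg mphi.
  by exists K => U hU; apply: hK; exact: unitary_mxM.
have := integral_pushforward mphi mEg ig measurable_unitary.
rewrite (eq_measure_integral mu); last by move=> A mA _; exact: mu_Haar.2.
by rewrite phiUd /Rintegral => ->.
Qed.

Lemma cint_mulmx (V : 'M[C]_d) f : unitary_mx V -> admissible f ->
  cint mu (fun U => f (V *m U)) = cint mu f.
Proof.
move=> hV hf; have [mRe mIm [K hK]] := hf.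
have hf' : admissible (fun U : M => f (V *m U)).
  split; [exact: measurableT_comp mRe (measurable_mulmx V)
         |exact: measurableT_comp mIm (measurable_mulmx V)|].
  by exists K => U hU; apply: hK; exact: unitary_mxM.
rewrite !cint_unitary //; congr Complex; apply: Rintegral_mulmx => //;
  exists K => U /hK; apply: le_trans; rewrite /cnorm1 ?lerDl ?lerDr //.
Qed.

End HaarIntegral.

Lemma eq_pairs_of_counts (T : eqType) (k1 k2 l1 l2 : T) :
  (forall j, (k1 == j) + (k2 == j) = (l1 == j) + (l2 == j))%N ->
  (k1 == l1) && (k2 == l2) || (k1 == l2) && (k2 == l1).
Proof.
move=> h; have := h k2; rewrite eqxx.
have [<-|n1] := eqVneq k1 l1.
  by have [_|] := eqVneq l2 k2; case: (k1 == k2).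
have [<-|n2] := eqVneq k1 l2.
  by have [_|] := eqVneq l1 k2; rewrite ?orbT //; case: (k1 == k2).
by have := h k1; rewrite eqxx !(eq_sym _ k1) (negbTE n1) (negbTE n2).
Qed.

Lemma expri_inj (R : realType) (m n : nat) :
  (m <= 2)%N -> (n <= 2)%N -> 'i%C ^+ m = 'i%C ^+ n :> R[i] -> m = n.
Proof.
have i2 : 'i%C ^+ 2 = -1 :> R[i] by exact: sqr_i.
case: m n => [|[|[|m]]] [|[|[|n]]] //= _ _; rewrite ?i2 ?expr0 ?expr1 => /eqP;
  by rewrite eq_complex /= => /andP [/eqP ? /eqP ?]; clear i2; exfalso; lra.
Qed.

Lemma conji_mul (R : realType) : ('i%C)^* * 'i%C = 1 :> R[i].
Proof.
by apply/eqP; rewrite eq_complex /= !(mul0r, mulr0, mulr1, mulN1r, sub0r, addr0, opprK) !eqxx.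
Qed.

Section PhaseAndRotation.
Variables (R : realType) (d : nat).
Local Notation C := R[i].

Lemma sum_delta (c : C) k (h : 'I_d -> C) : \sum_i c *+ (k == i) * h i = c * h k.
Proof.
rewrite (bigD1 k) //= eqxx mulr1n big1 ?addr0 // => i /negbTE.
by rewrite eq_sym => ->; rewrite mulr0n mul0r.
Qed.

Lemma sum_diag_mx (w : 'rV[C]_d) k (h : 'I_d -> C) :
  \sum_i diag_mx w k i * h i = w 0 k * h k.
Proof. by under eq_bigr do rewrite mxE; exact: sum_delta. Qed.

Lemma sum_conj_diag_mx (w : 'rV[C]_d) k (h : 'I_d -> C) :
  \sum_i (diag_mx w k i)^* * h i = (w 0 k)^* * h k.
Proof. by under eq_bigr do rewrite mxE rmorphMn; exact: sum_delta. Qed.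

Lemma diag_mx_unitary (w : 'rV[C]_d) :
  (forall i, w 0 i * (w 0 i)^* = 1) -> unitary_mx (diag_mx w).
Proof.
move=> hw; apply/matrixP => k m; rewrite !mxE.
transitivity (\sum_i diag_mx w k i * (diag_mx w m i)^*).
  by apply: eq_bigr => i _; rewrite /conjT !mxE.
rewrite sum_diag_mx mxE rmorphMn; have [->|/negbTE nkm] := eqVneq k m.
  by rewrite !mulr1n hw.
by rewrite !mulr0n mulr0.
Qed.

Variables (x x' : 'I_d) (a b : C).

Definition rot_mx : 'M[C]_d := \matrix_(k, l)
  if k == x then a *+ (x == l) + b *+ (x' == l)
  else if k == x' then (- b) *+ (x == l) + a *+ (x' == l) else (k == l)%:R.

Lemma sum_rot_mx k (h : 'I_d -> C) : \sum_l rot_mx k l * h l =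
  if k == x then a * h x + b * h x'
  else if k == x' then - b * h x + a * h x' else h k.
Proof.
under eq_bigr do rewrite mxE.
case: ifP => _; [|case: ifP => _].
- by under eq_bigr do rewrite mulrDl; rewrite big_split /= !sum_delta.
- by under eq_bigr do rewrite mulrDl; rewrite big_split /= !sum_delta.
- by rewrite (sum_delta 1) mul1r.
Qed.

Lemma sum_rot_mx_row (h : 'I_d -> C) : \sum_l rot_mx x l * h l = a * h x + b * h x'.
Proof. by rewrite sum_rot_mx eqxx. Qed.

Hypotheses (xx' : x != x') (aR : a^* = a) (bR : b^* = b) (ab1 : a ^+ 2 + b ^+ 2 = 1).

Lemma sum_conj_rot_mx_row h : \sum_l (rot_mx x l)^* * h l = a * h x + b * h x'.
Proof.
rewrite -sum_rot_mx_row; apply: eq_bigr => l _.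
by rewrite !mxE eqxx raddfD !raddfMn /= aR bR.
Qed.

Lemma rot_mx_unitary : unitary_mx rot_mx.
Proof.
have x'x : (x' == x) = false by rewrite eq_sym (negbTE xx').
apply/matrixP => k m; rewrite !mxE.
transitivity (\sum_l rot_mx k l * (rot_mx m l)^*).
  by apply: eq_bigr => l _; rewrite /conjT !mxE.
rewrite sum_rot_mx !mxE eqxx x'x (negbTE xx').
have [?|nkx] := eqVneq k x; [subst k | have [?|nkx'] := eqVneq k x'; first subst k];
  (have [?|_] := eqVneq m x; [subst m | have [?|_] := eqVneq m x'; first subst m]);
  rewrite /= ?eqxx ?x'x ?(negbTE nkx) ?(negbTE nkx') ?(eq_sym m k).
all: rewrite ?mulr0n ?mulr1n ?addr0 ?add0r ?raddfN /= ?aR ?bR ?rmorph0 ?rmorph_nat.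
all: try ring.
all: by rewrite -ab1; ring.
Qed.

End PhaseAndRotation.

Lemma double_of_rotation_identities (F : numFieldType) (a b P P' Q : F) :
  a ^+ 2 + b ^+ 2 = 1 -> a != 0 -> b != 0 ->
  P = a ^+ 4 * P + 4%:R * a ^+ 2 * b ^+ 2 * Q + b ^+ 4 * P' ->
  P' = a ^+ 4 * P' + 4%:R * a ^+ 2 * b ^+ 2 * Q + b ^+ 4 * P ->
  P = 2%:R * Q.
Proof.
move=> ab1 a0 b0 E1 E2.
have e1 : P * (a ^+ 2 + b ^+ 2) ^+ 2
          - (a ^+ 4 * P + 4%:R * a ^+ 2 * b ^+ 2 * Q + b ^+ 4 * P') = 0.
  by rewrite ab1 expr1n mulr1 -E1 subrr.
have e2 : P' * (a ^+ 2 + b ^+ 2) ^+ 2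
          - (a ^+ 4 * P' + 4%:R * a ^+ 2 * b ^+ 2 * Q + b ^+ 4 * P) = 0.
  by rewrite ab1 expr1n mulr1 -E2 subrr.
have n2 : 2%:R != 0 :> F by rewrite pnatr_eq0.
have eP : P = P'.
  have : 2%:R * b ^+ 2 * (a ^+ 2 + b ^+ 2) * (P - P') = 0.
    by rewrite -(subrr 0) -{1}e1 -e2; ring.
  rewrite ab1 mulr1 => /eqP.
  by rewrite !mulf_eq0 (negbTE n2) (negbTE b0) subr_eq0 => /eqP.
rewrite -eP in e1.
have : 2%:R * a ^+ 2 * b ^+ 2 * (P - 2%:R * Q) = 0 by rewrite -e1; ring.
by move/eqP; rewrite !mulf_eq0 (negbTE n2) (negbTE a0) (negbTE b0) subr_eq0 => /eqP.
Qed.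

Section SecondMoment.
Variables (R : realType) (d : nat).
Local Notation C := R[i].
Local Notation M := (MxSpace R d).

(* [pi2 k1 k2 l1 l2 U] is the entry <k1 k2| (U ⊗ U) P (U ⊗ U)^† |l1 l2>
   with P = Σ_a |a a><a a|. *)
Definition pi2 (k1 k2 l1 l2 : 'I_d) (U : 'M[C]_d) : C :=
  \sum_a (U k1 a * (U l1 a)^*) * (U k2 a * (U l2 a)^*).

Lemma pi2_swap k1 k2 l1 l2 : pi2 k1 k2 l1 l2 = pi2 k2 k1 l2 l1.
Proof. by apply/funext => U; apply: eq_bigr => a _; rewrite mulrC. Qed.

Lemma pi2_swapr k1 k2 l1 l2 : pi2 k1 k2 l1 l2 = pi2 k1 k2 l2 l1.
Proof. by apply/funext => U; apply: eq_bigr => a _; ring. Qed.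

Lemma pi2_mulmx (V U : 'M[C]_d) k1 k2 l1 l2 :
  pi2 k1 k2 l1 l2 (V *m U) =
  \sum_i1 V k1 i1 * (\sum_i2 V k2 i2 * (\sum_j1 (V l1 j1)^* *
    (\sum_j2 (V l2 j2)^* * pi2 i1 i2 j1 j2 U))).
Proof.
transitivity (\sum_a \sum_i1 \sum_i2 \sum_j1 \sum_j2
    V k1 i1 * V k2 i2 * (V l1 j1)^* * (V l2 j2)^* *
    ((U i1 a * (U j1 a)^*) * (U i2 a * (U j2 a)^*))).
  apply: eq_bigr => a _; rewrite !mxE !rmorph_sum !big_distrlr /=.
  apply: eq_bigr => i1 _; apply: eq_bigr => i2 _; rewrite big_distrlr /=.
  by apply: eq_bigr => j1 _; apply: eq_bigr => j2 _; rewrite !rmorphM; ring.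
rewrite exchange_big; apply: eq_bigr => i1 _; rewrite mulr_sumr exchange_big.
apply: eq_bigr => i2 _; rewrite !mulr_sumr exchange_big.
apply: eq_bigr => j1 _; rewrite !mulr_sumr exchange_big.
by apply: eq_bigr => j2 _; rewrite !mulr_sumr; apply: eq_bigr => a _; ring.
Qed.

Lemma admissible_pi2 k1 k2 l1 l2 : admissible (pi2 k1 k2 l1 l2 : M -> C).
Proof. rewrite /pi2; admissible_poly. Qed.

Variable mu : probability M R.
Hypothesis mu_Haar : is_Haar mu.

Definition moment2 k1 k2 l1 l2 := cint mu (pi2 k1 k2 l1 l2).

Lemma moment2_swap k1 k2 l1 l2 : moment2 k1 k2 l1 l2 = moment2 k2 k1 l2 l1.
Proof. by rewrite /moment2 pi2_swap. Qed.

Lemma moment2_swapr k1 k2 l1 l2 : moment2 k1 k2 l1 l2 = moment2 k1 k2 l2 l1.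
Proof. by rewrite /moment2 pi2_swapr. Qed.

Lemma moment2_mulmx (V : 'M[C]_d) k1 k2 l1 l2 : unitary_mx V ->
  moment2 k1 k2 l1 l2 =
  \sum_i1 V k1 i1 * (\sum_i2 V k2 i2 * (\sum_j1 (V l1 j1)^* *
    (\sum_j2 (V l2 j2)^* * moment2 i1 i2 j1 j2))).
Proof.
move=> hV; rewrite /moment2 -(cint_mulmx mu_Haar hV (admissible_pi2 _ _ _ _)).
under eq_fun do rewrite pi2_mulmx.
do 4 (apply: etrans;
        first (apply: (cint_lincomb mu_Haar) => ?; rewrite /pi2; admissible_poly);
      apply: eq_bigr => ? _; congr (_ * _)).
Qed.

Lemma moment2_phase (w : 'rV[C]_d) k1 k2 l1 l2 :
  (forall i, w 0 i * (w 0 i)^* = 1) ->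
  moment2 k1 k2 l1 l2 = w 0 k1 * w 0 k2 * (w 0 l1 * w 0 l2)^* * moment2 k1 k2 l1 l2.
Proof.
move=> hw; rewrite {1}(moment2_mulmx _ _ _ _ (diag_mx_unitary hw)).
by rewrite !sum_diag_mx !sum_conj_diag_mx rmorphM; ring.
Qed.

(* The phase 'i on the j-th basis vector multiplies the moment by 'i ^+ (m - n),
   where m and n count the occurrences of j among k1, k2 and among l1, l2. *)
Lemma moment2_eq0 k1 k2 l1 l2 :
  ~~ ((k1 == l1) && (k2 == l2) || (k1 == l2) && (k2 == l1)) -> moment2 k1 k2 l1 l2 = 0.
Proof.
apply: contraNeq => nz; apply: eq_pairs_of_counts => j.
pose w : 'rV[C]_d := \row_i 'i%C ^+ (i == j).
have hw i : w 0 i * (w 0 i)^* = 1.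
  by rewrite mxE; case: (i == j); rewrite ?expr0 ?expr1 ?rmorph1 ?mulr1 // mulrC conji_mul.
have := moment2_phase k1 k2 l1 l2 hw; rewrite !mxE -!exprD rmorphXn /= => e.
apply: expri_inj; [by case: (k1 == j); case: (k2 == j)
                 |by case: (l1 == j); case: (l2 == j) | apply/(mulIf nz)].
have ii n : ('i%C^*) ^+ n * 'i%C ^+ n = 1 :> C by rewrite -exprMn conji_mul expr1n.
by rewrite [in RHS]e -[LHS]mulr1 -(ii ((l1 == j) + (l2 == j))%N); ring.
Qed.

Lemma moment2_rot x x' (a b : C) :
  x != x' -> a^* = a -> b^* = b -> a ^+ 2 + b ^+ 2 = 1 ->
  moment2 x x x x = a ^+ 4 * moment2 x x x x
    + 4%:R * a ^+ 2 * b ^+ 2 * moment2 x x' x x' + b ^+ 4 * moment2 x' x' x' x'.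
Proof.
move=> xx' aR bR ab1; have x'x : (x' == x) = false by rewrite eq_sym (negbTE xx').
rewrite {1}(moment2_mulmx _ _ _ _ (rot_mx_unitary xx' aR bR ab1)).
rewrite !sum_rot_mx_row !sum_conj_rot_mx_row //.
rewrite [moment2 x' x x x']moment2_swap [moment2 x' x x' x]moment2_swap.
rewrite [moment2 x x' x' x]moment2_swapr.
set P := moment2 x x x x; set P' := moment2 x' x' x' x'; set Q := moment2 x x' x x'.
rewrite !moment2_eq0; try by rewrite ?eqxx ?(negbTE xx') ?x'x.
ring.
Qed.

Lemma moment2_diag_offdiag x x' : x != x' -> moment2 x x x x = 2%:R * moment2 x x' x x'.
Proof.
(* any real rotation with a, b nonzero would do; 3/5, 4/5 keep the entries rational *)
move=> xx'; pose a : C := 3%:R / 5%:R; pose b : C := 4%:R / 5%:R.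
have aR : a^* = a by rewrite fmorph_div !rmorph_nat.
have bR : b^* = b by rewrite fmorph_div !rmorph_nat.
have ab1 : a ^+ 2 + b ^+ 2 = 1 by rewrite /a /b; field.
have a0 : a != 0 by rewrite mulf_neq0 ?invr_eq0 ?pnatr_eq0.
have b0 : b != 0 by rewrite mulf_neq0 ?invr_eq0 ?pnatr_eq0.
apply: (double_of_rotation_identities ab1 a0 b0); first exact: moment2_rot.
rewrite (moment2_swap x x' x x'); apply: moment2_rot => //; by rewrite eq_sym.
Qed.

Lemma moment2_row_sum x : \sum_x' moment2 x x' x x' = 1.
Proof.
rewrite /moment2 -(cint_sum mu_Haar); last by move=> y; exact: admissible_pi2.
rewrite -[RHS](cint_cst mu 1); apply: eq_cint_unitary => //.
- by apply: admissible_sum => x'; exact: admissible_pi2.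
- exact: admissible_cst.
move=> U hU; have := unitary_row_dot x x hU; rewrite eqxx mulr1n => <-.
rewrite exchange_big /=.
by apply: eq_bigr => a _; rewrite -mulr_sumr unitary_col_norm // mulr1.
Qed.

Lemma moment2_diag x : moment2 x x x x = 2%:R / (d.+1)%:R.
Proof.
set P := moment2 x x x x.
have hx x' : 2%:R * moment2 x x' x x' = P + (x == x')%:R * P.
  have [<-|xx'] := eqVneq x x'; first by rewrite mulr1n mul1r mulr_natl mulr2n.
  by rewrite mulr0n mul0r addr0 /P (moment2_diag_offdiag xx').
have := congr1 ( *%R 2%:R) (moment2_row_sum x).
rewrite mulr_sumr (eq_bigr _ (fun x' _ => hx x')) big_split /= sumr_const card_ord.
rewrite (sum_delta 1) mul1r mulr1 -mulrSr => <-.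
by rewrite -[P *+ _]mulr_natr mulfK // pnatr_eq0.
Qed.

Lemma moment2_offdiag x x' : x != x' -> moment2 x x' x x' = (d.+1)%:R^-1.
Proof.
move=> xx'; apply: (mulfI (_ : 2%:R != 0)); first by rewrite pnatr_eq0.
by rewrite -moment2_diag_offdiag // moment2_diag.
Qed.

Lemma moment2E k1 k2 l1 l2 : moment2 k1 k2 l1 l2 =
  (((k1 == l1) && (k2 == l2)) + ((k1 == l2) && (k2 == l1)))%:R / (d.+1)%:R.
Proof.
have [|nm] := boolP ((k1 == l1) && (k2 == l2) || (k1 == l2) && (k2 == l1)); last first.
  rewrite moment2_eq0 //; move: nm; rewrite negb_or.
  by case/andP => /negbTE -> /negbTE ->; rewrite mul0r.
case/orP => /andP [/eqP <- /eqP <-]; rewrite ?[moment2 k1 k2 k2 k1]moment2_swapr.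
all: rewrite !eqxx /=; have [<-|k12] := eqVneq k1 k2; first by rewrite moment2_diag.
all: by rewrite moment2_offdiag // mul1r.
Qed.

End SecondMoment.

Section Twirl.
Variables (R : realType) (d : nat).
Local Notation C := R[i].
Local Notation M := (MxSpace R d).

Definition sandwich3 (X : op R (idx3 d)) (x y : idx3 d) (U : M) : C :=
  \sum_(z : idx3 d) \sum_(w : idx3 d) tens3 U x z * X z w * (tens3 U y w)^*.

Lemma twirl3_sandwich mu X x y : twirl3 mu X x y = cint mu (sandwich3 X x y).
Proof. by []. Qed.

Lemma admissible_sandwich3 X x y : admissible (sandwich3 X x y).
Proof. rewrite /sandwich3 /tens3; admissible_poly. Qed.

Lemma sum_idx3 (F : idx3 d -> C) : \sum_z F z = \sum_a \sum_b \sum_c F (a, b, c).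
Proof. by rewrite [RHS]pair_bigA [RHS]pair_bigA; apply: eq_bigr => -[[a b] c]. Qed.

Lemma sandwich3_diag (g : idx3 d -> C) U x y :
  sandwich3 (fun z w => if z == w then g z else 0) x y U =
  \sum_a \sum_b \sum_c (U x.1.1 a * (U y.1.1 a)^*) * (U x.1.2 b * (U y.1.2 b)^*) *
                       (U x.2 c * (U y.2 c)^*) * g (a, b, c).
Proof.
rewrite /sandwich3 sum_idx3.
apply: eq_bigr => a _; apply: eq_bigr => b _; apply: eq_bigr => c _.
rewrite (bigD1 (a, b, c)) //= eqxx big1 ?addr0 => [|w /negbTE]; last first.
  by rewrite eq_sym => ->; rewrite mulr0 mul0r.
by rewrite /tens3 !rmorphM; ring.
Qed.

Lemma sum_pair_diag (f g : 'I_d -> C) (c : C) :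
  \sum_a \sum_b f a * g b * (c * (if a == b then 1 else 0) - 1) =
  c * \sum_a f a * g a - (\sum_a f a) * (\sum_b g b).
Proof.
rewrite big_distrlr /= mulr_sumr -sumrB; apply: eq_bigr => a _.
under eq_bigr do rewrite mulrBr mulr1; rewrite sumrB; congr (_ - _).
rewrite (bigD1 a) //= eqxx big1 ?addr0 => [|b /negbTE]; first by ring.
by rewrite eq_sym => ->; rewrite !mulr0.
Qed.

Lemma natr_andb (a b : bool) : (a && b)%:R = a%:R * b%:R :> C.
Proof. by rewrite -mulnb natrM. Qed.

Lemma sandwich3_O_A x1 x2 x3 y1 y2 y3 (U : M) : unitary_mx U ->
  sandwich3 (@O_A R d) (x1, x2, x3) (y1, y2, y3) U =
  (d.+1)%:R * (x3 == y3)%:R * pi2 x1 x2 y1 y2 U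
  - (x1 == y1)%:R * (x2 == y2)%:R * (x3 == y3)%:R.
Proof.
move=> hU; rewrite sandwich3_diag /=.
transitivity ((\sum_a \sum_b U x1 a * (U y1 a)^* * (U x2 b * (U y2 b)^*) *
    ((d.+1)%:R * (if a == b then 1 else 0) - 1)) * \sum_c U x3 c * (U y3 c)^*).
  rewrite mulr_suml; apply: eq_bigr => a _; rewrite mulr_suml; apply: eq_bigr => b _.
  by rewrite mulr_sumr; apply: eq_bigr => c _; rewrite mulrAC.
by rewrite sum_pair_diag !unitary_row_dot // mulrBl mulrAC.
Qed.

Lemma sandwich3_O_B x1 x2 x3 y1 y2 y3 (U : M) : unitary_mx U ->
  sandwich3 (@O_B R d) (x1, x2, x3) (y1, y2, y3) U =
  (d.+1)%:R * (x1 == y1)%:R * pi2 x2 x3 y2 y3 U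
  - (x1 == y1)%:R * (x2 == y2)%:R * (x3 == y3)%:R.
Proof.
move=> hU; rewrite sandwich3_diag /=.
transitivity ((\sum_a U x1 a * (U y1 a)^*) * \sum_b \sum_c U x2 b * (U y2 b)^* *
    (U x3 c * (U y3 c)^*) * ((d.+1)%:R * (if b == c then 1 else 0) - 1)).
  rewrite mulr_suml; apply: eq_bigr => a _; rewrite mulr_sumr; apply: eq_bigr => b _.
  by rewrite mulr_sumr; apply: eq_bigr => c _; rewrite !mulrA.
by rewrite sum_pair_diag !unitary_row_dot // mulrBr mulrCA !mulrA.
Qed.

Lemma if_natr (b : bool) : (if b then 1 else 0) = b%:R :> C.
Proof. by case: b. Qed.

Variable mu : probability M R.
Hypothesis mu_Haar : is_Haar mu.

Lemma twirl3_O_A : twirl3 mu (@O_A R d) = @W12 R d.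
Proof.
apply/funext => -[[x1 x2] x3]; apply/funext => -[[y1 y2] y3].
rewrite twirl3_sandwich (eq_cint_unitary mu_Haar (admissible_sandwich3 _ _ _) _
  (sandwich3_O_A x1 x2 x3 y1 y2 y3)); last by rewrite /pi2; admissible_poly.
rewrite (cint_affine mu_Haar); last exact: admissible_pi2.
rewrite -/(moment2 mu x1 x2 y1 y2) moment2E //.
by rewrite /W12 /= !xpair_eqE if_natr natrD !natr_andb; field.
Qed.

Lemma twirl3_O_B : twirl3 mu (@O_B R d) = @W23 R d.
Proof.
apply/funext => -[[x1 x2] x3]; apply/funext => -[[y1 y2] y3].
rewrite twirl3_sandwich (eq_cint_unitary mu_Haar (admissible_sandwich3 _ _ _) _
  (sandwich3_O_B x1 x2 x3 y1 y2 y3)); last by rewrite /pi2; admissible_poly.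
rewrite (cint_affine mu_Haar); last exact: admissible_pi2.
rewrite -/(moment2 mu x2 x3 y2 y3) moment2E //.
by rewrite /W23 /= !xpair_eqE if_natr natrD !natr_andb; field.
Qed.

End Twirl.

Section IndependentTwirls.
Variables (R : realType) (dA dB : nat).

Lemma sandwich3_kron (XA : op R (idx3 dA)) (XB : op R (idx3 dB)) x y
    (U : MxSpace R dA) (V : MxSpace R dB) :
  \sum_(z : idx3 dA * idx3 dB) \sum_(w : idx3 dA * idx3 dB)
     (tens3 U x.1 z.1 * tens3 V x.2 z.2) * kron XA XB z w *
     (tens3 U y.1 w.1 * tens3 V y.2 w.2)^*
  = sandwich3 XA x.1 y.1 U * sandwich3 XB x.2 y.2 V.
Proof.
rewrite /sandwich3 big_distrlr /= [RHS]pair_bigA; apply: eq_bigr => -[z1 z2] _ /=.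
rewrite big_distrlr /= pair_bigA; apply: eq_bigr => -[w1 w2] _ /=.
by rewrite /kron /= rmorphM; ring.
Qed.

Lemma twirl3_AB_kron (muA : probability (MxSpace R dA) R)
    (muB : probability (MxSpace R dB) R) (XA : op R (idx3 dA)) (XB : op R (idx3 dB)) :
  is_Haar muA -> is_Haar muB ->
  twirl3_AB muA muB (kron XA XB) = kron (twirl3 muA XA) (twirl3 muB XB).
Proof.
move=> hA hB; apply/funext => x; apply/funext => y; rewrite /twirl3_AB {2}/kron /=.
transitivity (cint muA (fun U => twirl3 muB XB x.2 y.2 * sandwich3 XA x.1 y.1 U)).
  congr (cint muA _); apply/funext => U.
  rewrite mulrC twirl3_sandwich -(cintZ hB); last exact: admissible_sandwich3.
  by congr (cint muB _); apply/funext => V; exact: sandwich3_kron.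
rewrite (cintZ hA); last exact: admissible_sandwich3.
by rewrite mulrC.
Qed.

End IndependentTwirls.

Theorem proposition4 (R : realType) (dA dB : nat)
    (muA : probability (MxSpace R dA) R) (muB : probability (MxSpace R dB) R) :
  is_Haar muA -> is_Haar muB ->
  [/\ twirl3 muA (@O_A R dA) = @W12 R dA,
      twirl3 muB (@O_B R dB) = @W23 R dB &
      twirl3_AB muA muB (kron (@O_A R dA) (@O_B R dB))
        = kron (@W12 R dA) (@W23 R dB)].
Proof.
move=> hA hB; split; [exact: twirl3_O_A | exact: twirl3_O_B |].
by rewrite twirl3_AB_kron // twirl3_O_A // twirl3_O_B.
Qed.
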